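(* Let $\boldsymbol{\mathcal{G}}=(\mathcal{V},\boldsymbol{\mathcal{E}},\mu(\cdot))$ be a stochastic digraph with vertex set $\mathbb{Z}_n$, edge sets $\mathcal{E}_1,\dots,\mathcal{E}_h$, and out-neighborhood map $H(x,w)=\{y:(x,y)\in\mathcal{E}_w\}$, such that there is no pair $(i,w)\in\mathbb{Z}_n\times\mathbb{Z}_h$ with $\mu(\{w\})>0$ and $H(i,w)=\emptyset$. Let $\mathcal{Q}\subset\mathbb{Z}_n$ and let $\check{\boldsymbol{\mathcal{G}}}$ be the augmented stochastic digraph on $\mathbb{Z}_{n+2}$ (with the same $\mu$) obtained by replacing, in each $\mathcal{E}_s$, every edge $(i,j)$ with $j\in\mathcal{Q}$ by the edge $(i,n+1)$, and adding the edges $(n+1,n+2)$ and $(n+2,n+2)$ to each $\mathcal{E}_s$. Let $\check H$ be its out-neighborhood map and consider the Markov decision process on states $\mathbb{Z}_{n+2}$ with action space $\mathcal{A}(i)$ at state $i$ equal to the set of tuples $a=(\xi_{1,a},\dots,\xi_{h,a})$ with $\xi_{w,a}\in\check H(i,w)$ for each $w$, transition probabilities $$\check p(j\mid i,a)=\sum_{w\in\{s\in\mathbb{Z}_h:\,\xi_{s,a}=j\}}\mu(\{w\}),$$ and reward $r(i,a,j)=-\mathbb{I}_{\{n+1\}}(j)$. Let $v_\star$ be the optimal state-value function of this MDP, i.e., $v_\star(0,x)=0$ and $v_\star(k,x)=\max_{a\in\mathcal{A}(x)}\sum_{j}\check p(j\mid x,a)\big(r(x,a,j)+v_\star(k-1,j)\big)$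 for $k\geqslant1$. Then for all $k\in\mathbb{Z}_{\geqslant0}$ and all $x\in\mathbb{Z}_n$, $$\mathfrak{V}_{\mathcal{Q}}(k,x)=-v_\star(k,x),$$ where $\mathfrak{V}_{\mathcal{Q}}(k,x):=\inf_{\boldsymbol{x}\in\mathcal{S}(x)}\mathbb{P}\big(\exists\,t\in\{1,\dots,k\}:\boldsymbol{x}_t\in\mathcal{Q}\big)$ is the strong recurrence probability.
   Context: A stochastic digraph is a triple $(\mathbb{Z}_n,\{\mathcal{E}_s\}_{s=1}^h,\mu)$ with $\mathcal{E}_s\subset\mathbb{Z}_n\times\mathbb{Z}_n$ and $\mu$ the common distribution of an i.i.d. sequence $\boldsymbol{w}_k:\Omega\to\mathbb{Z}_h$, $k\in\mathbb{Z}_{\geqslant0}$, on a probability space $(\Omega,\mathcal{F},\mathbb{P})$. A stochastic directed path from $x$ is a map $\omega\mapsto\{\boldsymbol{x}_k(\omega)\}_{k=0}^{\boldsymbol{K}(\omega)}$ with $\boldsymbol{x}_0=x$, $\boldsymbol{x}_{k+1}(\omega)\in H(\boldsymbol{x}_k(\omega),\boldsymbol{w}_k(\omega))$ for all $\omega$ and $k<\boldsymbol{K}(\omega)$, and with $\boldsymbol{x}_{k+1}$ measurable with respect to $\sigma(\boldsymbol{w}_0,\dots,\boldsymbol{w}_k)$ for each $k$. It is maximal if it cannot be extended; $\mathcal{S}(x)$ is the set of maximal stochastic directed paths from $x$. $\mathbb{I}_{A}$ denotes the indicator function of the set $A$. *)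

From HB Require Import structures.
From mathcomp Require Import all_boot all_order all_algebra.
From mathcomp Require Import all_classical all_reals all_analysis.
Set Implicit Arguments. Unset Strict Implicit. Unset Printing Implicit Defensive.
Import Order.TTheory GRing.Theory Num.Theory.
Local Open Scope classical_set_scope.
Local Open Scope ring_scope.

(* Conventions: Z_n is rendered as 'I_n = {0,..,n-1}; Z_h as 'I_h.
   A stochastic digraph on 'I_n is given by edge sets E : 'I_h -> {set 'I_n * 'I_n}
   and a distribution mu : 'I_h -> R. *)

Definition outnb (m h : nat) (E : 'I_h -> {set 'I_m * 'I_m}) (x : 'I_m) (w : 'I_h)
  : {set 'I_m} := [set y | (x, y) \in E w].

Definition is_distr (R : realType) (h : nat) (mu : 'I_h -> R) : Prop :=
  (forall w, 0 <= mu w) /\ \sum_(w < h) mu w = 1.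

Definition iid_law (R : realType) (d : measure_display) (Omega : measurableType d)
  (P : probability Omega R) (h : nat) (mu : 'I_h -> R) (w : nat -> Omega -> 'I_h) : Prop :=
  (forall k a, measurable [set om | w k om = a]) /\
  (forall (s : seq nat) (j : nat -> 'I_h), uniq s ->
     P [set om | forall k, k \in s -> w k om = j k] = (\prod_(k <- s) mu (j k))%:E).

(* "k < K" where K = None stands for K = +infinity *)
Definition lt_len (k : nat) (K : option nat) : bool :=
  if K is Some m then (k < m)%N else true.

Definition gen_w (d : measure_display) (Omega : measurableType d) (h : nat)
  (w : nat -> Omega -> 'I_h) (k : nat) : set (set Omega) :=
  [set A | exists i a, (i <= k)%N /\ A = [set om | w i om = a]].

(* Maximal stochastic directed path from x0: x_k(om) for k <= K(om)
   (values of xs beyond K are irrelevant junk), K(om) = None means an infinite path. *)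
Definition max_stoch_path (d : measure_display) (Omega : measurableType d)
  (m h : nat) (E : 'I_h -> {set 'I_m * 'I_m}) (w : nat -> Omega -> 'I_h) (x0 : 'I_m)
  (xs : nat -> Omega -> 'I_m) (K : Omega -> option nat) : Prop :=
  (forall om, xs 0%N om = x0) /\
  (forall om k, lt_len k (K om) -> xs k.+1 om \in outnb E (xs k om) (w k om)) /\
  (forall k (y : 'I_m), <<s gen_w w k >> [set om | xs k.+1 om = y]) /\
  (forall om k, K om = Some k -> outnb E (xs k om) (w k om) = finset.set0).

Definition hit_event (d : measure_display) (Omega : measurableType d) (m : nat)
  (Q : {set 'I_m}) (k : nat) (xs : nat -> Omega -> 'I_m) (K : Omega -> option nat)
  : set Omega :=
  [set om | exists t, [/\ (1 <= t <= k)%N, (t <= odflt t (K om))%N & xs t om \in Q]].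

Definition strong_rec (R : realType) (d : measure_display) (Omega : measurableType d)
  (P : probability Omega R) (n h : nat) (E : 'I_h -> {set 'I_n * 'I_n})
  (w : nat -> Omega -> 'I_h) (Q : {set 'I_n}) (k : nat) (x : 'I_n) : \bar R :=
  ereal_inf [set P (hit_event Q k p.1 p.2) | p in
              [set p : (nat -> Omega -> 'I_n) * (Omega -> option nat)
                 | max_stoch_path E w x p.1 p.2]].

Definition emb (n : nat) (i : 'I_n) : 'I_n.+2 := inord i.
(* the new vertex "n+1" of the paper (value n here) and "n+2" (value n+1) *)
Definition vA (n : nat) : 'I_n.+2 := inord n.
Definition vB (n : nat) : 'I_n.+2 := ord_max.

Definition aug_edges (n h : nat) (E : 'I_h -> {set 'I_n * 'I_n}) (Q : {set 'I_n})
  (s : 'I_h) : {set 'I_n.+2 * 'I_n.+2} :=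
  [set (emb p.1, if p.2 \in Q then vA n else emb p.2) | p in E s]
    :|: [set (vA n, vB n); (vB n, vB n)].

Definition actions (n h : nat) (E : 'I_h -> {set 'I_n * 'I_n}) (Q : {set 'I_n})
  (i : 'I_n.+2) : {set {ffun 'I_h -> 'I_n.+2}} :=
  [set a : {ffun 'I_h -> 'I_n.+2} | [forall w, a w \in outnb (aug_edges E Q) i w]].

Definition trans_p (R : realType) (n h : nat) (mu : 'I_h -> R)
  (a : {ffun 'I_h -> 'I_n.+2}) (j : 'I_n.+2) : R :=
  \sum_(w < h | a w == j) mu w.

Definition reward (R : realType) (n : nat) (j : 'I_n.+2) : R :=
  - (j == vA n)%:R.

Definition qval (R : realType) (n h : nat) (mu : 'I_h -> R)
  (u : 'I_n.+2 -> R) (a : {ffun 'I_h -> 'I_n.+2}) : R :=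
  \sum_(j < n.+2) trans_p mu a j * (reward R j + u j).

Definition is_opt_value (R : realType) (n h : nat) (E : 'I_h -> {set 'I_n * 'I_n})
  (Q : {set 'I_n}) (mu : 'I_h -> R) (v : nat -> 'I_n.+2 -> R) : Prop :=
  (forall x, v 0%N x = 0) /\
  (forall k x,
     (exists2 a, a \in actions E Q x & v k.+1 x = qval mu (v k) a) /\
     (forall a, a \in actions E Q x -> qval mu (v k) a <= v k.+1 x)).

(* A path adapted to (w_k) is, at time t, a function F of the word w_0 ... w_(t-1);
   the probability that it meets Q within k steps is therefore an expectation over
   i.i.d. words, which unfolds letter by letter ([word_prob_hit]). One such step is
   exactly the Bellman backup of the MDP on the augmented graph: moving into Q is
   redirected to the vertex n+1 (reward -1), which is then absorbed into n+2 (reward 0)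
   so that hitting Q is counted once. Induction on the horizon shows that every
   maximal path hits Q with probability at least -v(k, x), and following maximizing
   actions builds a maximal path for which equality holds. *)

From HB Require Import structures.
From mathcomp Require Import all_boot all_order all_algebra.
From mathcomp Require Import all_classical all_reals all_analysis.
From mathcomp Require Import zify.
Set Implicit Arguments. Unset Strict Implicit. Unset Printing Implicit Defensive.
Import Order.TTheory GRing.Theory Num.Theory.
Local Open Scope classical_set_scope.
Local Open Scope ring_scope.

Section RandomWords.
Variables (R : realType) (h : nat) (mu : 'I_h -> R).
Hypothesis mu_sum : \sum_(u < h) mu u = 1.

Fixpoint word_prob (k : nat) (G : seq 'I_h -> bool) : R :=
  if k is k'.+1 then \sum_(u < h) mu u * word_prob k' (fun s => G (u :: s))
  else (G [::])%:R.

Lemma word_prob_predT k (G : seq 'I_h -> bool) : (forall s, G s) -> word_prob k G = 1.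
Proof.
elim: k G => [|k IH] G GT /=; first by rewrite GT.
by rewrite -mu_sum; apply: eq_bigr => u _; rewrite IH ?mulr1.
Qed.

Variables (n : nat) (Q : {set 'I_n}).

Definition hit_word (k : nat) (F : seq 'I_h -> 'I_n) (s : seq 'I_h) : bool :=
  [exists t : 'I_k, F (take t.+1 s) \in Q].

Lemma hit_word0 F s : hit_word 0 F s = false.
Proof. by apply/existsP => -[[]]. Qed.

Lemma hit_word_cons k F u s :
  hit_word k.+1 F (u :: s) = (F [:: u] \in Q) || hit_word k (fun s => F (u :: s)) s.
Proof.
apply/existsP/orP => [[[[|t] ltk] /= FQ]|[FQ|/existsP [t FQ]]].
- by left; rewrite take0 in FQ.
- by right; apply/existsP; exists (Ordinal (ltk : (t < k)%N)).
- by exists ord0; rewrite /= take0.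
- by exists (lift ord0 t).
Qed.

Lemma word_prob_hit k F : word_prob k.+1 (hit_word k.+1 F) =
  \sum_(u < h) mu u *
    (if F [:: u] \in Q then 1 else word_prob k (hit_word k (fun s => F (u :: s)))).
Proof.
apply: eq_bigr => u _; congr (_ * _); case: ifP => FQ.
  by apply: word_prob_predT => s; rewrite hit_word_cons FQ.
by congr word_prob; apply: funext => s; rewrite hit_word_cons FQ.
Qed.

End RandomWords.

Lemma bigsetUP (T : Type) (I : finType) (F : I -> set T) (t : T) :
  (\big[setU/set0]_i F i) t <-> exists i, F i t.
Proof.
rewrite -bigcup_seq; split => [[i _ Fit]|[i Fit]]; first by exists i.
by exists i; rewrite //= mem_index_enum.
Qed.

Section Prefixes.
Variables (d : measure_display) (T : measurableType d) (h : nat) (w : nat -> T -> 'I_h).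

Definition prefix (m : nat) (om : T) : seq 'I_h := [seq w i om | i <- iota 0 m].

Definition cylinder (p : seq 'I_h) : set T := [set om | prefix (size p) om = p].

Lemma size_prefix m om : size (prefix m om) = m.
Proof. by rewrite size_map size_iota. Qed.

Lemma nth_prefix u m om i : (i < m)%N -> nth u (prefix m om) i = w i om.
Proof. by move=> im; rewrite (nth_map 0) ?size_iota // nth_iota. Qed.

Lemma prefixS m om : prefix m.+1 om = rcons (prefix m om) (w m om).
Proof. by rewrite /prefix -addn1 iotaD map_cat cats1. Qed.

Lemma take_prefix t m om : (t <= m)%N -> take t (prefix m om) = prefix t om.
Proof. by move=> tm; rewrite /prefix -map_take take_iota (minn_idPl tm). Qed.

Lemma cylinder_rcons p u :
  cylinder (rcons p u) = cylinder p `&` [set om | w (size p) om = u].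
Proof.
apply/seteqP; split => om; rewrite /cylinder /= size_rcons prefixS.
  by move/eqP; rewrite eqseq_rcons => /andP [/eqP -> /eqP ->].
by case=> -> ->.
Qed.

Lemma prefix_eventS m (f : seq 'I_h -> bool) :
  [set om | f (prefix m.+1 om)] =
  \big[setU/set0]_u ([set om | f (rcons (prefix m om) u)] `&` [set om | w m om = u]).
Proof.
apply/seteqP; split => om /=; rewrite prefixS.
  by move=> fom; apply/bigsetUP; exists (w m om).
by case/bigsetUP => u [/= fom wu]; rewrite wu.
Qed.

Lemma measurable_prefix_event m (f : seq 'I_h -> bool) :
  (forall i a, (i < m)%N -> measurable [set om | w i om = a]) ->
  measurable [set om | f (prefix m om)].
Proof.
elim: m f => [|m IH] f mw.
  have -> : [set om | f (prefix 0 om)] = if f [::] then setT else set0.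
    by apply/seteqP; split => om; case: (f [::]).
  by case: (f [::]).
rewrite prefix_eventS; apply: bigsetU_measurable => u _; apply: measurableI.
  by apply: (IH (fun s => f (rcons s u))) => i a im; apply: mw; apply: ltnW.
exact: mw.
Qed.

End Prefixes.

Section IidWords.
Variables (R : realType) (d : measure_display) (Omega : measurableType d)
  (P : probability Omega R) (h : nat) (mu : 'I_h -> R) (w : nat -> Omega -> 'I_h).
Hypothesis iid : iid_law P mu w.

Lemma measurable_cylinder p : measurable (cylinder w p).
Proof.
have -> : cylinder w p = [set om | prefix w (size p) om == p].
  by apply/seteqP; split => om /eqP.
by apply: (measurable_prefix_event (pred1 p)) => i a _; exact: iid.1.
Qed.

Lemma probability_cylinder p : P (cylinder w p) = (\prod_(u <- p) mu u)%:E.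
Proof.
case: p => [|u0 p]; last move: (u0 :: p) => {}p.
  have -> : cylinder w [::] = setT by apply/seteqP; split.
  by rewrite probability_setT big_nil.
have -> : cylinder w p =
    [set om | forall k, k \in iota 0 (size p) -> w k om = nth u0 p k].
  apply/seteqP; split => om /= pom.
    by move=> k; rewrite mem_iota add0n => kp; rewrite -[in RHS]pom nth_prefix.
  apply: (@eq_from_nth _ u0); rewrite ?size_prefix // => k kp.
  by rewrite nth_prefix // pom // mem_iota.
by rewrite iid.2 ?iota_uniq // (big_nth u0) /index_iota subn0.
Qed.

Lemma probability_prefix_event_cylinder k : forall p (G : seq 'I_h -> bool),
  P ([set om | G (prefix w (size p + k) om)] `&` cylinder w p) =
    (\prod_(u <- p) mu u * word_prob mu k (fun s => G (p ++ s)))%:E.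
Proof.
elim: k => [|k IH] p G.
  rewrite addn0 /= cats0.
  have -> : [set om | G (prefix w (size p) om)] `&` cylinder w p =
      if G p then cylinder w p else set0.
    apply/seteqP; split => om /=; first by case=> + pom; rewrite pom => ->.
    by case: ifP => // Gp pom; split; rewrite //= pom.
  by case: ifP; rewrite ?probability_cylinder ?mulr1 ?measure0 ?mulr0.
have -> : [set om | G (prefix w (size p + k.+1) om)] `&` cylinder w p =
    \big[setU/set0]_u
      ([set om | G (prefix w (size (rcons p u) + k) om)] `&` cylinder w (rcons p u)).
  apply/seteqP; split => om.
    case=> Gom pom; apply/bigsetUP; exists (w (size p) om).
    by rewrite cylinder_rcons size_rcons addSnnS.
  by case/bigsetUP => u []; rewrite cylinder_rcons size_rcons addSnnS => Gom [].
have mF u : measurable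
    ([set om | G (prefix w (size (rcons p u) + k) om)] `&` cylinder w (rcons p u)).
  apply: measurableI; last exact: measurable_cylinder.
  by apply: measurable_prefix_event => i a _; exact: iid.1.
have disjF : trivIset setT (fun u =>
    [set om | G (prefix w (size (rcons p u) + k) om)] `&` cylinder w (rcons p u)).
  apply/trivIsetP => u u' _ _ uu'; apply/seteqP; split => om //.
  rewrite !cylinder_rcons => -[[_ [_ wu]] [_ [_ wu']]].
  by rewrite -wu -wu' eqxx in uu'.
rewrite measure_semi_additive_ord //; last exact: bigsetU_measurable.
rewrite (eq_bigr _ (fun u _ => IH (rcons p u) G)) sumEFin mulr_sumr.
congr (_%:E); apply: eq_bigr => u _.
rewrite big_rcons /= -mulrA; congr (_ * (_ * _)).
by congr word_prob; apply: funext => s; rewrite cat_rcons.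
Qed.

Lemma probability_prefix_event k (G : seq 'I_h -> bool) (A : set Omega) :
  (forall om, A om <-> G (prefix w k om)) -> P A = (word_prob mu k G)%:E.
Proof.
move=> AG; have := probability_prefix_event_cylinder k [::] G.
rewrite big_nil mul1r => <-; congr (P _).
by apply/seteqP; split => om; [move/AG | case => /AG].
Qed.

End IidWords.

Section AdaptedPaths.
Variables (d : measure_display) (Omega : measurableType d) (h : nat)
  (w : nat -> Omega -> 'I_h).

Lemma gen_w_prefix_invariant k (A : set Omega) : <<s gen_w w k >> A ->
  forall om om', prefix w k.+1 om = prefix w k.+1 om' -> (A om <-> A om').
Proof.
move=> GA om om' eq_om.
have wE i : (i <= k)%N -> w i om = w i om'.
  by move=> ik; rewrite -[LHS](@nth_prefix _ _ _ w (w i om) k.+1) // eq_om nth_prefix.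
suff : <<s gen_w w k >> `<=` [set B | B om <-> B om'] by apply.
apply: smallest_sub => [|_ [i [a [ik ->]]]]; last by rewrite /= wE.
split => [//|B /= BE|B /= BE]; first by rewrite /setD /=; tauto.
by split => -[j _ Bj]; exists j => //; apply/BE.
Qed.

Variables (n : nat) (E : 'I_h -> {set 'I_n * 'I_n}) (x0 : 'I_n)
  (xs : nat -> Omega -> 'I_n) (K : Omega -> option nat).
Hypothesis xsP : max_stoch_path E w x0 xs K.

Lemma max_stoch_path_prefix :
  exists F : seq 'I_h -> 'I_n, forall om t, xs t om = F (prefix w t om).
Proof.
have xs_prefix t om om' : prefix w t om = prefix w t om' -> xs t om = xs t om'.
  case: xsP => xs0 [_ [xs_meas _]].
  case: t => [|t] eq_om; first by rewrite !xs0.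
  by have /(_ erefl) -> := (gen_w_prefix_invariant (xs_meas t (xs t.+1 om)) eq_om).1.
have /choice [F FE] : forall s : seq 'I_h,
    exists y, forall om, prefix w (size s) om = s -> xs (size s) om = y.
  move=> s; have [[om0 om0s]|no_om] := pselect (exists om, prefix w (size s) om = s).
    by exists (xs (size s) om0) => om oms; apply: xs_prefix; rewrite oms om0s.
  by exists x0 => om oms; case: no_om; exists om.
by exists F => om t; have := FE (prefix w t om) om; rewrite size_prefix; apply.
Qed.

End AdaptedPaths.

Section HitEvent.
Variables (R : realType) (d : measure_display) (Omega : measurableType d)
  (P : probability Omega R) (h : nat) (mu : 'I_h -> R) (w : nat -> Omega -> 'I_h)
  (n : nat) (Q : {set 'I_n}).
Hypothesis iid : iid_law P mu w.

Lemma probability_hit_event k (xs : nat -> Omega -> 'I_n) K F :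
  (forall om t, xs t om = F (prefix w t om)) -> (forall om, K om = None) ->
  P (hit_event Q k xs K) = (word_prob mu k (hit_word Q k F))%:E.
Proof.
move=> xsF K_inf; apply: (probability_prefix_event iid) => om.
rewrite /hit_event /= K_inf /=; split.
  case=> -[|t] [/andP [t1 tk] _ xQ] //; apply/existsP; exists (Ordinal tk).
  by rewrite take_prefix // -xsF.
case/existsP => t; rewrite take_prefix ?ltn_ord // -xsF => xQ.
by exists t.+1; rewrite ltn_ord.
Qed.

End HitEvent.

Section AugmentedMDP.
Variables (R : realType) (n h : nat) (E : 'I_h -> {set 'I_n * 'I_n}) (Q : {set 'I_n})
  (mu : 'I_h -> R) (v : nat -> 'I_n.+2 -> R).
Hypotheses (mu_ge0 : forall u, 0 <= mu u) (mu_sum : \sum_(u < h) mu u = 1)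
  (vP : is_opt_value E Q mu v).

Lemma val_emb (i : 'I_n) : val (emb i) = i.
Proof. by rewrite /= inordK //; have := ltn_ord i; lia. Qed.

Lemma val_vA : val (vA n) = n.
Proof. by rewrite /= inordK //; lia. Qed.

Lemma emb_inj : injective (@emb n).
Proof. by move=> i j /(congr1 val); rewrite !val_emb => /val_inj. Qed.

Lemma emb_neq_vA i : (emb i == vA n) = false.
Proof. by rewrite -val_eqE /= val_emb val_vA ltn_eqF. Qed.

Lemma emb_neq_vB i : (emb i == vB n) = false.
Proof. by rewrite -val_eqE /= val_emb ltn_eqF // leqW. Qed.

Lemma vA_neq_vB : (vA n == vB n) = false.
Proof. by rewrite -val_eqE /= val_vA ltn_eqF. Qed.

Definition redirect (y : 'I_n) : 'I_n.+2 := if y \in Q then vA n else emb y.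

Lemma outnb_aug_emb z u b :
  b \in outnb (aug_edges E Q) (emb z) u <-> exists2 y, (z, y) \in E u & b = redirect y.
Proof.
rewrite inE /aug_edges finset.in_setU finset.in_set2 !xpair_eqE.
rewrite emb_neq_vA emb_neq_vB orbF.
split => [/imsetP [[z' y] zy [/emb_inj -> ->]]|[y zy ->]]; first by exists y.
by apply/imsetP; exists (z, y).
Qed.

Lemma outnb_aug_sink c u b : c = vA n \/ c = vB n ->
  b \in outnb (aug_edges E Q) c u -> b = vB n.
Proof.
move=> c_sink; rewrite inE /aug_edges finset.in_setU finset.in_set2 !xpair_eqE.
case/orP => [/imsetP [p _ [cE _]]|/orP [/andP [_ /eqP //]|/andP [_ /eqP //]]].
by case: c_sink => c_sink; move: (emb_neq_vA p.1) (emb_neq_vB p.1);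
  rewrite -cE c_sink eqxx.
Qed.

Lemma qvalE (u : 'I_n.+2 -> R) (a : {ffun 'I_h -> 'I_n.+2}) :
  qval mu u a = \sum_(s < h) mu s * (reward R (a s) + u (a s)).
Proof.
rewrite /qval /trans_p (partition_big a predT) //=.
by apply: eq_bigr => j _; rewrite big_distrl; apply: eq_bigr => s /eqP ->.
Qed.

Lemma opt_valueS_sink k c : c = vA n \/ c = vB n -> v k.+1 c = v k (vB n).
Proof.
move=> c_sink; have [[a + ->] _] := vP.2 k c; rewrite inE => /forallP a_sink.
rewrite qvalE (eq_bigr (fun s => mu s * v k (vB n))) => [|s _].
  by rewrite -big_distrl /= mu_sum mul1r.
by rewrite (outnb_aug_sink c_sink (a_sink s)) /reward eq_sym vA_neq_vB oppr0 add0r.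
Qed.

Lemma opt_value_vB k : v k (vB n) = 0.
Proof.
by elim: k => [|k IH]; [exact: vP.1 | rewrite opt_valueS_sink ?IH //; right].
Qed.

Lemma opt_value_vA k : v k (vA n) = 0.
Proof.
by case: k => [|k]; [exact: vP.1 | rewrite opt_valueS_sink ?opt_value_vB //; left].
Qed.

Lemma exists_edge (i : 'I_n) u : exists y, (i, y) \in E u.
Proof.
have [[a + _] _] := vP.2 0%N (emb i); rewrite inE => /forallP /(_ u).
by case/outnb_aug_emb => y iy _; exists y.
Qed.

Lemma redirect_action z (f : 'I_h -> 'I_n) :
  (forall u, (z, f u) \in E u) -> [ffun u => redirect (f u)] \in actions E Q (emb z).
Proof.
move=> zf; rewrite inE; apply/forallP => u.
by apply/outnb_aug_emb; exists (f u); rewrite ?ffunE.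
Qed.

Lemma qval_redirect k (f : 'I_h -> 'I_n) :
  qval mu (v k) [ffun u => redirect (f u)] =
  - \sum_(u < h) mu u * (if f u \in Q then 1 else - v k (emb (f u))).
Proof.
rewrite qvalE -sumrN; apply: eq_bigr => u _; rewrite ffunE /redirect -mulrN.
case: ifP => _; first by rewrite /reward eqxx opt_value_vA addr0.
by rewrite /reward emb_neq_vA oppr0 add0r opprK.
Qed.

Definition feasible (F : seq 'I_h -> 'I_n) : Prop :=
  forall p u, (forall z, z \in rcons p u -> 0 < mu z) -> (F p, F (rcons p u)) \in E u.

Lemma oppv_le_word_prob_hit k x F : F [::] = x -> feasible F ->
  - v k (emb x) <= word_prob mu k (hit_word Q k F).
Proof.
elim: k x F => [|k IH] x F Fx Ffeas; first by rewrite /= vP.1 oppr0 ler0n.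
have /choice [y0 y0E] := exists_edge x.
pose f u := if 0 < mu u then F [:: u] else y0 u.
have fE u : (x, f u) \in E u.
  rewrite /f; case: ifP => // mu_pos; rewrite -Fx.
  by apply: (Ffeas [::]) => z; rewrite inE => /eqP ->.
have := (vP.2 k (emb x)).2 _ (redirect_action fE).
rewrite qval_redirect -lerN2 opprK => /le_trans; apply.
rewrite (word_prob_hit mu_sum); apply: ler_sum => u _; rewrite /f.
have [mu_pos|] := boolP (0 < mu u); last first.
  by rewrite lt0r negb_and negbK mu_ge0 orbF => /eqP ->; rewrite !mul0r.
apply: ler_wpM2l => //; case: ifP => // _.
apply: IH => // p u' p_pos /=; rewrite -rcons_cons; apply: Ffeas => z.
by rewrite rcons_cons inE => /predU1P [->|]; [exact: mu_pos | exact: p_pos].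
Qed.

Lemma exists_opt_policy : exists nx : nat -> 'I_n -> 'I_h -> 'I_n,
  (forall j z u, (z, nx j z u) \in E u) /\
  (forall j z, v j.+1 (emb z) = qval mu (v j) [ffun u => redirect (nx j z u)]).
Proof.
have /choice [a aP] : forall jz : nat * 'I_n, exists a,
    a \in actions E Q (emb jz.2) /\ v jz.1.+1 (emb jz.2) = qval mu (v jz.1) a.
  by case=> j z; have [[a ? ?] _] := vP.2 j (emb z); exists a.
have /choice [y yP] : forall t : nat * 'I_n * 'I_h,
    exists y, (t.1.2, y) \in E t.2 /\ a t.1 t.2 = redirect y.
  case=> [[j z] u]; have [+ _] := aP (j, z); rewrite inE => /forallP /(_ u).
  by case/outnb_aug_emb => y; exists y.
exists (fun j z u => y (j, z, u)); split => [j z u|j z]; first by case: (yP (j, z, u)).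
have [_ ->] := aP (j, z); congr qval; apply/ffunP => u; rewrite ffunE.
by case: (yP (j, z, u)).
Qed.

Variable nx : nat -> 'I_n -> 'I_h -> 'I_n.
Hypothesis nx_opt :
  forall j z, v j.+1 (emb z) = qval mu (v j) [ffun u => redirect (nx j z u)].

(* Beyond the horizon [k.-1] sticks at 0, so the path keeps moving along edges. *)
Fixpoint follow (k : nat) (x : 'I_n) (s : seq 'I_h) : 'I_n :=
  if s is u :: s' then follow k.-1 (nx k.-1 x u) s' else x.

Lemma follow_rcons k x s u :
  follow k x (rcons s u) = nx (k - size s).-1 (follow k x s) u.
Proof.
elim: s k x => [|u' s IH] k x /=; first by rewrite subn0.
by rewrite IH; have -> : (k.-1 - size s = k - (size s).+1)%N by lia.
Qed.

Lemma word_prob_hit_follow k x :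
  word_prob mu k (hit_word Q k (follow k x)) = - v k (emb x).
Proof.
elim: k x => [|k IH] x; first by rewrite /= hit_word0 vP.1 oppr0.
rewrite (word_prob_hit mu_sum) nx_opt qval_redirect opprK; apply: eq_bigr => u _ /=.
by rewrite IH.
Qed.

End AugmentedMDP.

Section RecurrenceValue.
Variables (R : realType) (d : measure_display) (Omega : measurableType d)
  (P : probability Omega R) (n h : nat) (E : 'I_h -> {set 'I_n * 'I_n})
  (mu : 'I_h -> R) (w : nat -> Omega -> 'I_h) (Q : {set 'I_n})
  (v : nat -> 'I_n.+2 -> R).
Hypotheses (mu_sum : \sum_(u < h) mu u = 1) (iid : iid_law P mu w)
  (vP : is_opt_value E Q mu v).

Lemma max_stoch_path_infinite x xs K :
  max_stoch_path E w x xs K -> forall om, K om = None.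
Proof.
move=> [_ [_ [_ xs_max]]] om; case K_om: (K om) => [m|] //.
have [y Ey] := exists_edge vP (xs m om) (w m om).
by move/setP: (xs_max om m K_om) => /(_ y); rewrite !inE Ey.
Qed.

Lemma max_stoch_path_feasible x xs K F : max_stoch_path E w x xs K ->
  (forall om t, xs t om = F (prefix w t om)) -> feasible E mu F.
Proof.
move=> xsP xsF p u p_pos.
(* [F] is only meaningful on words that some [om] reads: positivity provides one. *)
have [om om_pu] : exists om, cylinder w (rcons p u) om.
  apply: contrapT => no_om; have := probability_cylinder iid (rcons p u).
  have -> : cylinder w (rcons p u) = set0.
    by apply/seteqP; split => // om om_pu; apply: no_om; exists om.
  rewrite measure0 => -[] /esym /eqP; apply/negP; rewrite gt_eqF //.
  by rewrite big_seq_cond; apply: prodr_gt0 => z /andP [/p_pos].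
move: (om_pu); rewrite cylinder_rcons => -[om_p wu].
have := (xsP.2.1 om (size p)); rewrite (max_stoch_path_infinite xsP) inE !xsF prefixS.
by rewrite om_p wu; apply.
Qed.

Lemma exists_opt_path k x : exists xs, max_stoch_path E w x xs (fun=> None) /\
  P (hit_event Q k xs (fun=> None)) = (- v k (emb x))%:E.
Proof.
have [nx [nxE nx_opt]] := exists_opt_policy vP.
pose xs t om := follow nx k x (prefix w t om).
exists xs; split; last first.
  rewrite (probability_hit_event Q iid k (F := follow nx k x)) //.
  by rewrite (word_prob_hit_follow mu_sum vP nx_opt).
split => //; split; first by move=> om t _; rewrite /xs prefixS follow_rcons inE nxE.
split => // t y.
have -> : [set om | xs t.+1 om = y] =
    [set om | pred1 y (follow nx k x (prefix w t.+1 om))].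
  by apply/seteqP; split => om /eqP.
apply: (@measurable_prefix_event _ (g_sigma_algebraType (gen_w w t)) _ w t.+1
  (fun s => pred1 y (follow nx k x s))) => i a it.
by apply: sub_gen_smallest; exists i, a.
Qed.

End RecurrenceValue.

Theorem proposition2 (R : realType) (d : measure_display) (Omega : measurableType d)
  (P : probability Omega R) (n h : nat) (E : 'I_h -> {set 'I_n * 'I_n})
  (mu : 'I_h -> R) (w : nat -> Omega -> 'I_h) (Q : {set 'I_n})
  (v : nat -> 'I_n.+2 -> R) :
  is_distr mu ->
  iid_law P mu w ->
  (forall (i : 'I_n) (s : 'I_h), 0 < mu s -> outnb E i s != finset.set0) ->
  is_opt_value E Q mu v ->
  forall (k : nat) (x : 'I_n), strong_rec P E w Q k x = (- v k (emb x))%:E.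
Proof.
move=> [mu_ge0 mu_sum] iid _ vP k x.
apply/le_anti/andP; split.
  have [xs [xsP <-]] := exists_opt_path mu_sum iid vP k x.
  by apply: ereal_inf_lbound; exists (xs, fun=> None).
apply: le_ereal_inf_tmp => _ [[xs K] /= xsP <-].
have [F xsF] := max_stoch_path_prefix xsP.
rewrite (probability_hit_event Q iid k xsF (max_stoch_path_infinite vP xsP)) lee_fin.
apply: (oppv_le_word_prob_hit mu_ge0 mu_sum vP k _
  (max_stoch_path_feasible iid vP xsP xsF)).
by rewrite -(xsF point 0%N); case: xsP.
Qed.
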